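(* Let $G$ be a unicyclic graph of diameter $2$. Then $G$ is group vertex magic if and only if $G$ is the cycle $C_4$ or the cycle $C_5$.
   Context: All graphs are finite, simple and undirected. A unicyclic graph is a connected graph containing exactly one cycle. For an additive abelian group $\mathcal{A}$ with identity $0$, a map $\ell:V(G)\to\mathcal{A}\setminus\{0\}$ is an $\mathcal{A}$-vertex magic labeling if there is $\mu\in\mathcal{A}$ with $\sum_{u\in N(v)}\ell(u)=\mu$ for every vertex $v$; $G$ is $\mathcal{A}$-vertex magic if it admits such a labeling, and group vertex magic if it is $\mathcal{A}$-vertex magic for every nontrivial abelian group $\mathcal{A}$. *)

From mathcomp Require Import all_boot all_order all_algebra.
Set Implicit Arguments. Unset Strict Implicit. Unset Printing Implicit Defensive.
Import GRing.Theory.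

Definition simple_graph (T : finType) (e : rel T) : Prop :=
  symmetric e /\ irreflexive e.

Definition connected_graph (T : finType) (e : rel T) : Prop :=
  forall x y : T, connect e x y.

Definition is_graph_cycle (T : finType) (e : rel T) (p : seq T) : Prop :=
  [/\ 3 <= size p, uniq p & cycle e p].

Definition cycle_edges (T : finType) (p : seq T) : {set {set T}} :=
  [set [set x; next p x] | x in p].

Definition unicyclic (T : finType) (e : rel T) : Prop :=
  [/\ connected_graph e,
      exists p, is_graph_cycle e p
    & forall p q, is_graph_cycle e p -> is_graph_cycle e q ->
                  cycle_edges p = cycle_edges q].

Definition dist_le (T : finType) (e : rel T) (k : nat) (x y : T) : Prop :=
  exists p : seq T, [/\ size p <= k, path e x p & last x p = y].

Definition diameter2 (T : finType) (e : rel T) : Prop :=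
  (forall x y, dist_le e 2 x y) /\ (exists x y, ~ dist_le e 1 x y).

Definition vertex_magic_labeling (T : finType) (e : rel T) (A : zmodType)
    (l : T -> A) : Prop :=
  (forall v, l v != 0%R) /\
  exists mu : A, forall v, (\sum_(u | e v u) l u)%R = mu.

Definition A_vertex_magic (T : finType) (e : rel T) (A : zmodType) : Prop :=
  exists l : T -> A, vertex_magic_labeling e l.

Definition group_vertex_magic (T : finType) (e : rel T) : Prop :=
  forall A : zmodType, (exists a : A, a != 0%R) -> A_vertex_magic e A.

Definition cycle_adj (n : nat) (i j : 'I_n) : bool :=
  (val j == (val i).+1 %% n) || (val i == (val j).+1 %% n).

Definition is_cycle_graph (T : finType) (e : rel T) (n : nat) : Prop :=
  exists f : T -> 'I_n, bijective f /\ forall x y, e x y = cycle_adj (f x) (f y).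

From mathcomp Require Import all_boot all_order all_algebra zify.
Import GRing.Theory.

(* In a graph of diameter 2, an edge va lies on a cycle as soon as v has a
   second neighbour b and a has a neighbour a' other than v (a walk of length
   at most 2 from a' to b closes the cycle).  In a unicyclic graph all such edges belong to the one
   cycle, which contains at most two edges at each vertex.  So if every degree
   is at least 2 the graph is 2-regular, and a 2-regular graph of diameter 2 is
   C_4 or C_5; these are magic for any constant labelling.  Otherwise a vertex
   p of degree 1 makes its neighbour c adjacent to every other vertex, and a
   vertex x <> c of the cycle then has degree exactly 2.  A Z_2-magic labelling
   is constantly 1, so all degrees have the same parity: contradiction. *)

Set Implicit Arguments.
Unset Strict Implicit.
Unset Printing Implicit Defensive.

Definition nbhd (T : finType) (e : rel T) (v : T) : {set T} := [set u | e v u].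

Lemma regular_group_vertex_magic (T : finType) (e : rel T) k :
  (forall v, #|nbhd e v| = k) -> group_vertex_magic e.
Proof.
move=> reg A [a a_nz]; exists (fun=> a); split=> //; exists (a *+ k)%R => v.
by rewrite -(reg v) -sumr_const; apply: eq_bigl => u; rewrite inE.
Qed.

Lemma Z2_neq0_eq1 (z : 'Z_2) : z != 0%R -> z = 1%R.
Proof. by case: z => [[|[|//]] ?] // _; apply: val_inj. Qed.

Lemma Z2_vertex_magic_odd_degree (T : finType) (e : rel T) u v :
  A_vertex_magic e 'Z_2 -> odd #|nbhd e u| = odd #|nbhd e v|.
Proof.
move=> [l [l_nz [mu sum_mu]]].
have deg_mu w : (#|nbhd e w|%:R : 'Z_2)%R = mu.
  rewrite -(sum_mu w) -sumr_const; apply: eq_big => [x|x _]; first by rewrite inE.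
  exact/esym/Z2_neq0_eq1.
have := congr1 (@nat_of_ord _) (deg_mu u); rewrite -(deg_mu v) !val_Zp_nat // !modn2.
by do 2 case: odd.
Qed.

Lemma ordS2_neq n (i : 'I_n) : 2 < n -> ordS (ordS i) != i.
Proof.
move=> n_gt2; rewrite -val_eqE /=; case: i => i /= lt_in.
have [lt_i1n | eq_i1n] : i.+1 < n \/ i.+1 = n by lia.
  rewrite (modn_small lt_i1n).
  have [lt_i2n | eq_i2n] : i.+2 < n \/ i.+2 = n by lia.
    by rewrite modn_small //; lia.
  by rewrite eq_i2n modnn; lia.
by rewrite eq_i1n modnn modn_small; lia.
Qed.

Lemma cycle_adjE n (i j : 'I_n) : cycle_adj i j = (j == ordS i) || (i == ordS j).
Proof. by []. Qed.

Lemma card_cycle_adj n (i : 'I_n) : 2 < n -> #|[set j | cycle_adj i j]| = 2.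
Proof.
move=> n_gt2; have -> : [set j | cycle_adj i j] = [set ordS i; ord_pred i].
  apply/setP => j; rewrite !inE cycle_adjE.
  by rewrite -[in i == _](ord_predK i) (inj_eq (@ordS_inj n)) (eq_sym _ j).
by rewrite cards2 -(inj_eq (@ordS_inj n)) ord_predK ordS2_neq.
Qed.

Lemma cycle_graph_regular (T : finType) (e : rel T) n :
  is_cycle_graph e n -> 2 < n -> forall v, #|nbhd e v| = 2.
Proof.
move=> [f [f_bij f_e]] n_gt2 v; rewrite -(card_cycle_adj (f v) n_gt2).
rewrite -(card_imset _ (bij_inj f_bij)); apply: eq_card => i.
have [g _ gK] := f_bij.
by rewrite -(gK i) (mem_imset _ _ (bij_inj f_bij)) !inE f_e.
Qed.

Lemma index_next (T : eqType) (L : seq T) x : uniq L -> x \in L ->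
  index (next L x) L = (index x L).+1 %% size L.
Proof.
move=> L_uniq xL; rewrite next_nth xL.
case: L L_uniq xL => // y0 L L_uniq xL.
have : index x (y0 :: L) <= size L by rewrite -ltnS index_mem.
rewrite leq_eqVlt => /orP [/eqP -> | lt_iL].
  by rewrite nth_default // modnn /= eqxx.
by rewrite modn_small ?ltnS // -[nth _ _ _]/(nth y0 (y0 :: L) _.+1) index_uniq.
Qed.

Lemma regular2_spanning_cycle_graph (T : finType) (e : rel T) (L : seq T) :
  symmetric e -> (forall v, #|nbhd e v| = 2) -> uniq L -> cycle e L ->
  (forall x, x \in L) -> 2 < size L -> is_cycle_graph e (size L).
Proof.
move=> e_sym reg2 L_uniq L_cycle L_full L_gt2.
pose f x : 'I_(size L) := Ordinal (etrans (index_mem x L) (L_full x)).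
have f_inj : injective f.
  by move=> x y /(congr1 val) /=; apply: index_inj; rewrite ?L_full.
have f_next x : f (next L x) = ordS (f x).
  by apply: val_inj; rewrite /= index_next.
have next_neq_prev x : next L x != prev L x.
  rewrite -(inj_eq f_inj) -(inj_eq (@ordS_inj _)) -!f_next (next_prev L_uniq).
  by rewrite !f_next ordS2_neq.
have nbhdE x : nbhd e x = [set next L x; prev L x].
  apply/esym/eqP; rewrite eqEcard subUset !sub1set !inE cards2 next_neq_prev reg2.
  by rewrite next_cycle // e_sym prev_cycle.
exists f; split.
  by apply: inj_card_bij f_inj _; rewrite card_ord -(card_uniqP L_uniq) max_card.
move=> x y; rewrite cycle_adjE -!f_next !(inj_eq f_inj).
have /setP/(_ y) := nbhdE x; rewrite !inE => ->.
by rewrite (eq_sym x) (can2_eq (prev_next L_uniq) (next_prev L_uniq)).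
Qed.

Lemma dist_le2P (T : finType) (e : rel T) x y :
  dist_le e 2 x y -> [\/ x = y, e x y | exists2 w, e x w & e w y].
Proof.
case=> [[|a [|b [|c s]]]] [] //= _; first by move=> _ ->; apply: Or31.
  by rewrite andbT => exy <-; apply: Or32.
by rewrite andbT => /andP [xa ab] <-; apply: Or33; exists a.
Qed.

Lemma dist_le1_edge (T : finType) (e : rel T) x y : e x y -> dist_le e 1 x y.
Proof. by move=> exy; exists [:: y]; rewrite /= exy. Qed.

Lemma dist_le_refl (T : finType) (e : rel T) k x : dist_le e k x x.
Proof. by exists [::]. Qed.

Lemma cycle_edges_next_prev (T : finType) (p : seq T) v u : uniq p ->
  [set v; u] \in cycle_edges p -> u = next p v \/ u = prev p v.
Proof.
move=> p_uniq /imsetP [y _ /setP E].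
have /set2P uE : u \in [set y; next p y] by rewrite -E !inE eqxx orbT.
have /set2P [vy | vE] : v \in [set y; next p y] by rewrite -E !inE eqxx.
  left; subst v; case: uE => [uy | //].
  have /set2P [nyE | //] : next p y \in [set y; u] by rewrite E !inE eqxx orbT.
  by rewrite uy nyE.
right; rewrite vE prev_next //; case: uE => [// | uv].
have /set2P [yv | -> //] : y \in [set v; u] by rewrite E !inE eqxx.
by rewrite uv -vE yv.
Qed.

Lemma card_cycle_edges_at (T : finType) (p : seq T) x : uniq p ->
  #|[set u | [set x; u] \in cycle_edges p]| <= 2.
Proof.
move=> p_uniq; apply: (@leq_trans #|[set next p x; prev p x]|); last first.
  by rewrite cards2; case: (_ != _).
apply/subset_leq_card/subsetP => u; rewrite !inE.
by case/cycle_edges_next_prev => // ->; rewrite eqxx ?orbT.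
Qed.

Lemma graph_cycle_edge_avoiding (T : finType) (e : rel T) s c :
  is_graph_cycle e s -> exists x y, [/\ e x y, x != c & y != c].
Proof.
case=> s_gt2 s_uniq s_cycle; have [cs | cNs] := boolP (c \in s).
  case/rot_to: cs => i s' Es.
  have : cycle e (c :: s') by rewrite -Es rot_cycle.
  have : uniq (c :: s') by rewrite -Es rot_uniq.
  have : 2 < size (c :: s') by rewrite -Es size_rot.
  case: s' {Es} => [|x [|y t]] //= _.
  rewrite !inE !negb_or => /andP [/and3P [cx cy _] _] /and3P [_ exy _].
  by exists x, y; rewrite exy eq_sym cx eq_sym cy.
move: s_gt2 s_uniq s_cycle cNs; case: s => [|x [|y t]] //= _ _ /andP [exy _].
rewrite !inE !negb_or => /andP [cx /andP [cy _]].
by exists x, y; rewrite exy eq_sym cx eq_sym cy.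
Qed.

Lemma nbhd_other (T : finType) (e : rel T) v a :
  1 < #|nbhd e v| -> exists2 b, e v b & b != a.
Proof.
move=> /card_gt1P [x [y [+ + xy]]]; rewrite !inE => evx evy.
by case: (eqVneq x a) => [xa | xa]; [exists y; rewrite // -xa eq_sym | exists x].
Qed.

Section SimpleGraph.

Variables (T : finType) (e : rel T).
Hypotheses (e_sym : symmetric e) (e_irr : irreflexive e).

Lemma edge_neq x y : e x y -> x != y.
Proof. by apply: contraTneq => ->; rewrite e_irr. Qed.

Lemma nbhd_set2E v a b y : nbhd e v = [set a; b] -> e v y = (y == a) || (y == b).
Proof. by move/setP/(_ y); rewrite !inE. Qed.

Lemma nbhd_card2_other v a : #|nbhd e v| = 2 -> e v a ->
  exists2 a', a' != a & nbhd e v = [set a; a'].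
Proof.
move=> /eqP/cards2P [p [q [pq Nv]]]; rewrite (nbhd_set2E _ Nv).
case/orP => /eqP ->; first by exists q; rewrite // eq_sym.
by exists p; rewrite // setUC.
Qed.

Lemma regular2_nbhdE v a b : #|nbhd e v| = 2 -> e v a -> e v b -> a != b ->
  nbhd e v = [set a; b].
Proof.
move=> deg2 eva evb ab; apply/esym/eqP.
by rewrite eqEcard subUset !sub1set !inE eva evb cards2 ab deg2.
Qed.

Lemma regular2_triangle_dist_le1 v a b : (forall v, #|nbhd e v| = 2) ->
  (forall x y, dist_le e 2 x y) -> e v a -> e a b -> e b v ->
  forall y, dist_le e 1 v y.
Proof.
move=> reg2 d2 eva eab ebv y; have [-> | yv] := eqVneq y v; first exact: dist_le_refl.
have evb : e v b by rewrite e_sym.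
have eav : e a v by rewrite e_sym.
have eba : e b a by rewrite e_sym.
have /nbhd_set2E ev := regular2_nbhdE (reg2 v) eva evb (edge_neq eab).
apply: dist_le1_edge; case/dist_le2P: (d2 v y) => [vy | // | [w]].
  by rewrite vy eqxx in yv.
rewrite ev => /orP [] /eqP -> {w}.
  have /nbhd_set2E -> := regular2_nbhdE (reg2 a) eav eab (edge_neq evb).
  by rewrite (negbTE yv) => /= /eqP ->.
have /nbhd_set2E -> := regular2_nbhdE (reg2 b) ebv eba (edge_neq eva).
by rewrite (negbTE yv) => /= /eqP ->.
Qed.

Lemma mem_ball2 v a b a' b' x :
  nbhd e v = [set a; b] -> nbhd e a = [set v; a'] -> nbhd e b = [set v; b'] ->
  dist_le e 2 v x -> x \in [:: v; a; b; a'; b'].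
Proof.
move=> /nbhd_set2E ev /nbhd_set2E ea /nbhd_set2E eb.
rewrite !inE; case/dist_le2P => [-> | | [w]]; first by rewrite eqxx.
  by rewrite ev => /orP [] ->; rewrite /= ?orbT.
by rewrite ev => /orP [] /eqP ->; rewrite ?ea ?eb => /orP [] ->; rewrite /= ?orbT.
Qed.

Lemma regular2_diameter2_cycle_graph : (forall v, #|nbhd e v| = 2) ->
  diameter2 e -> is_cycle_graph e 4 \/ is_cycle_graph e 5.
Proof.
move=> reg2 [d2 [v [y far]]].
have /eqP/cards2P [a [b [ab Nv]]] := reg2 v; have ev x := nbhd_set2E x Nv.
have eva : e v a by rewrite ev eqxx.
have evb : e v b by rewrite ev eqxx orbT.
have eav : e a v by rewrite e_sym.
have ebv : e b v by rewrite e_sym.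
have [a' a'v Na] := nbhd_card2_other (reg2 a) eav; have ea x := nbhd_set2E x Na.
have [b' b'v Nb] := nbhd_card2_other (reg2 b) ebv; have eb x := nbhd_set2E x Nb.
have eaa' : e a a' by rewrite ea eqxx orbT.
have ebb' : e b b' by rewrite eb eqxx orbT.
have cover x := mem_ball2 Nv Na Nb (d2 v x).
have va : v != a := edge_neq eva.
have vb : v != b := edge_neq evb.
have va' : v != a' by rewrite eq_sym.
have vb' : v != b' by rewrite eq_sym.
have aa' : a != a' := edge_neq eaa'.
have bb' : b != b' := edge_neq ebb'.
have [a'b | a'b] := eqVneq a' b.
  by case: far; apply: (regular2_triangle_dist_le1 reg2 d2 eva _ ebv); rewrite -a'b.
have ab' : a != b'.
  apply: contra_neq a'b => ab'; apply/eqP.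
  by move: ebb'; rewrite -ab' e_sym ea (eq_sym b v) (negbTE vb) eq_sym.
have [a'b' | a'b'] := eqVneq a' b'.
  left; apply: (@regular2_spanning_cycle_graph _ _ [:: v; a; a'; b]) => //.
  - by rewrite /= !inE !negb_or va va' vb aa' ab a'b.
  - by rewrite /= eva eaa' a'b' (e_sym b') ebb' ebv.
  - by move=> x; move: (cover x); rewrite !inE a'b'; do !case: eqP.
have ea'b' : e a' b'.
  case/dist_le2P: (d2 a' b) => [/eqP | ea'b | [w ea'w]]; first by rewrite (negbTE a'b).
    by move: ea'b; rewrite e_sym eb eq_sym (negbTE va') (negbTE a'b').
  rewrite e_sym eb => /orP [/eqP wv | /eqP <- //].
  by move: ea'w; rewrite wv e_sym ev eq_sym (negbTE aa') (negbTE a'b).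
right; apply: (@regular2_spanning_cycle_graph _ _ [:: v; a; a'; b'; b]) => //.
- by rewrite /= !inE !negb_or va va' vb' vb aa' ab' ab a'b' a'b eq_sym bb'.
- by rewrite /= eva eaa' ea'b' (e_sym b') ebb' ebv.
- by move=> x; move: (cover x); rewrite !inE; do !case: eqP.
Qed.

Lemma graph_cycle3 x y z : e x y -> e y z -> e z x -> is_graph_cycle e [:: x; y; z].
Proof.
move=> exy eyz ezx; split=> //=; last by rewrite exy eyz ezx.
have xz : x != z by rewrite eq_sym (edge_neq ezx).
by rewrite !inE !negb_or (edge_neq exy) xz (edge_neq eyz).
Qed.

Lemma cycle_edges_head (x y : T) s : [set x; y] \in cycle_edges [:: x, y & s].
Proof. by apply/imsetP; exists x; rewrite ?mem_head // /next /= eqxx. Qed.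

Lemma diameter2_edge_on_cycle v a b a' : (forall x y, dist_le e 2 x y) ->
  e v a -> e v b -> a != b -> e a a' -> a' != v ->
  exists2 p, is_graph_cycle e p & [set v; a] \in cycle_edges p.
Proof.
move=> d2 eva evb ab eaa' a'v.
have triangle c : e a c -> e c v -> exists2 p, is_graph_cycle e p & [set v; a] \in cycle_edges p.
  by move=> eac ecv; exists [:: v; a; c]; [exact: graph_cycle3 | exact: cycle_edges_head].
have ebv : e b v by rewrite e_sym.
have [a'b | a'b] := eqVneq a' b; first by apply: (triangle a'); rewrite // a'b.
have va' : v != a' by rewrite eq_sym.
case/dist_le2P: (d2 a' b) => [/eqP | ea'b | [w ea'w ewb]]; first by rewrite (negbTE a'b).
  exists [:: v; a; a'; b]; last exact: cycle_edges_head.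
  split=> //=; last by rewrite eva eaa' ea'b ebv.
  by rewrite !inE !negb_or (edge_neq eva) va' (edge_neq evb) (edge_neq eaa') ab a'b.
have [wv | wv] := eqVneq w v; first by apply: (triangle a'); rewrite -?wv.
have [wa | aw] := eqVneq w a; first by apply: (triangle b); rewrite -?wa.
exists [:: v; a; a'; w; b]; last exact: cycle_edges_head.
split=> //=; last by rewrite eva eaa' ea'w ewb ebv.
rewrite !inE !negb_or (edge_neq eva) va' eq_sym wv (edge_neq evb) (edge_neq eaa').
by rewrite eq_sym aw ab (edge_neq ea'w) a'b (edge_neq ewb).
Qed.

End SimpleGraph.

Section UnicyclicDiameter2.

Variables (T : finType) (e : rel T).
Hypotheses (e_simple : simple_graph e) (e_unicyclic : unicyclic e)
  (d2 : forall x y, dist_le e 2 x y).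

Let e_sym : symmetric e := proj1 e_simple.
Let e_irr : irreflexive e := proj2 e_simple.

Lemma degree_le2 v : 1 < #|nbhd e v| ->
  (forall a, e v a -> exists2 a', e a a' & a' != v) -> #|nbhd e v| <= 2.
Proof.
move=> deg_gt1 branch; have [_ [s0 s0_cycle] cycles_eq] := e_unicyclic.
have s0_uniq : uniq s0 by case: s0_cycle.
apply: leq_trans (card_cycle_edges_at v s0_uniq); apply/subset_leq_card/subsetP => a.
rewrite !inE => eva; have [a' eaa' a'v] := branch a eva.
have [b evb ba] := nbhd_other a deg_gt1.
have ab : a != b by rewrite eq_sym.
have [p p_cycle va_p] := diameter2_edge_on_cycle e_sym e_irr d2 eva evb ab eaa' a'v.
by rewrite (cycles_eq _ _ s0_cycle p_cycle).
Qed.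

Lemma min_degree2_regular : (forall v, 1 < #|nbhd e v|) -> forall v, #|nbhd e v| = 2.
Proof.
move=> deg_gt1 v; apply/eqP; rewrite eqn_leq deg_gt1 andbT.
by apply: degree_le2 => // a _; apply: nbhd_other.
Qed.

Lemma low_degree_not_Z2_magic p q : q != p -> #|nbhd e p| <= 1 ->
  ~ A_vertex_magic e 'Z_2.
Proof.
move=> qp deg_p Z2magic; have [_ [s0 s0_cycle] _] := e_unicyclic.
have [c epc] : exists c, e p c.
  case/dist_le2P: (d2 p q) => [/eqP | epq | [c epc _]]; last by exists c.
    by rewrite eq_sym (negbTE qp).
  by exists q.
have pc u : e p u -> u = c.
  move=> epu; have cNp : c \in nbhd e p by rewrite inE.
  by have := card_le1P deg_p c cNp u; rewrite !inE epu => /esym/eqP.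
have ec x : x != c -> e c x.
  move=> xc; case/dist_le2P: (d2 p x) => [<- | /pc xE | [w /pc -> //]].
    by rewrite e_sym.
  by rewrite xE eqxx in xc.
have [x [y [exy xc yc]]] := graph_cycle_edge_avoiding c s0_cycle.
have xp : x != p by apply: contra_neq yc => xp; apply: pc; rewrite -xp.
have deg_x_gt1 : 1 < #|nbhd e x|.
  by apply/card_gt1P; exists c, y; rewrite !inE exy e_sym ec // eq_sym.
have deg_x : #|nbhd e x| = 2.
  apply/eqP; rewrite eqn_leq deg_x_gt1 andbT; apply: degree_le2 => // w exw.
  have [-> | wc] := eqVneq w c; first by exists p; [rewrite e_sym | rewrite eq_sym].
  by exists c; [rewrite e_sym ec | rewrite eq_sym].
have deg_p1 : #|nbhd e p| = 1.
  by apply/eqP; rewrite eqn_leq deg_p; apply/card_gt0P; exists c; rewrite inE.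
by have := Z2_vertex_magic_odd_degree x p Z2magic; rewrite deg_x deg_p1.
Qed.

End UnicyclicDiameter2.

Theorem theorem3p1 (T : finType) (e : rel T) :
  simple_graph e -> unicyclic e -> diameter2 e ->
  (group_vertex_magic e <-> is_cycle_graph e 4 \/ is_cycle_graph e 5).
Proof.
move=> e_simple e_unicyclic diam; have [d2 [x [y far]]] := diam; split; last first.
  by case=> /cycle_graph_regular/(_ isT)/regular_group_vertex_magic.
move=> /(_ 'Z_2 (ex_intro _ 1%R isT)) Z2magic.
have [/existsP [p deg_p] | /existsPn deg_gt1] := boolP [exists v, #|nbhd e v| <= 1].
  have xy : x != y by apply/eqP => xy; apply: far; rewrite xy; apply: dist_le_refl.
  have [q qp] : exists q, q != p.
    by case: (eqVneq x p) => [<- | xp]; [exists y; rewrite eq_sym | exists x].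
  by case: (low_degree_not_Z2_magic e_simple e_unicyclic d2 qp deg_p).
have [e_sym e_irr] := e_simple.
apply: regular2_diameter2_cycle_graph e_sym e_irr _ diam.
by apply: min_degree2_regular => // v; rewrite ltnNge deg_gt1.
Qed.
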